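(* Let $m,n\in\mathbb{Z}_{\ge0}$ and $N\in\mathbb{Z}_{>0}$. If $E_4^{\,m}E_6^{\,n}$ satisfies a monic MLDE of weight $4m+6n$ and order $N$, then $N\ge\max\{m,n\}+1$.
   Context: $q=e^{2\pi iz}$, $f'=\frac{1}{2\pi i}\frac{df}{dz}$; $E_2,E_4,E_6$ are the Eisenstein series with constant term $1$, and $\mathcal{M}_w$ is the space of holomorphic modular forms of weight $w$ on $\mathrm{SL}(2,\mathbb{Z})$. For $k\in\mathbb{R}$, $D_kf=f'-\frac{k}{12}E_2f$, $D_k^{(0)}=\mathrm{id}$, $D_k^{(j)}=D_{k+2j-2}\circ\cdots\circ D_k$. A monic MLDE of weight $k$ and order $N$ is an equation $(D_k^{(N)}+g_1D_k^{(N-1)}+\cdots+g_N)f=0$ with $g_i\in\mathcal{M}_{2i}$. *)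

From Stdlib Require Import Reals List ZArith ClassicalEpsilon.
From Coquelicot Require Import Coquelicot.
Open Scope R_scope.

Definition cexp (z : C) : C := (exp (Re z) * cos (Im z), exp (Re z) * sin (Im z)).

Definition qvar (z : C) : C := cexp (Cmult (RtoC (2 * PI)) (Cmult Ci z)).

Definition CSeries (a : nat -> C) : C :=
  (Series (fun n => Re (a n)), Series (fun n => Im (a n))).

Definition sigma (k n : nat) : R :=
  fold_right Rplus 0
    (map (fun d => if Nat.eqb (n mod d) 0 then INR d ^ k else 0) (seq 1 n)).

Definition Eis (c : R) (k : nat) (z : C) : C :=
  Cplus 1 (Cmult (RtoC c)
    (CSeries (fun j => Cmult (RtoC (sigma (k - 1) (S j))) (Cpow (qvar z) (S j))))).
Definition E2 : C -> C := Eis (-24) 2.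
Definition E4 : C -> C := Eis 240 4.
Definition E6 : C -> C := Eis (-504) 6.

(* complex derivative d/dz (total: some value when it exists, arbitrary otherwise) *)
Definition cderiv (f : C -> C) (z : C) : C :=
  epsilon (inhabits (RtoC 0)) (fun l : C => @is_derive C_AbsRing C_NormedModule f z l).

Definition qderiv (f : C -> C) (z : C) : C :=
  Cmult (Cinv (Cmult (RtoC (2 * PI)) Ci)) (cderiv f z).

Definition Serre (k : R) (f : C -> C) (z : C) : C :=
  Cminus (qderiv f z) (Cmult (RtoC (k / 12)) (Cmult (E2 z) (f z))).

Fixpoint SerreIter (k : R) (j : nat) (f : C -> C) : C -> C :=
  match j with
  | O => f
  | S j' => Serre (k + 2 * INR j') (SerreIter k j' f)
  end.

Definition upper_half (z : C) : Prop := 0 < Im z.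

Definition is_modular_form (w : nat) (g : C -> C) : Prop :=
  (forall z, upper_half z -> exists l : C, @is_derive C_AbsRing C_NormedModule g z l) /\
  (forall a b c d : Z, (a * d - b * c)%Z = 1%Z -> forall z, upper_half z ->
     g (Cdiv (Cplus (Cmult (IZR a) z) (IZR b)) (Cplus (Cmult (IZR c) z) (IZR d)))
     = Cmult (Cpow (Cplus (Cmult (IZR c) z) (IZR d)) w) (g z)) /\
  (* holomorphic at the cusp: bounded as Im z -> +oo *)
  (exists M : R, forall z, 1 <= Im z -> Cmod (g z) <= M).

Definition satisfies_monic_MLDE (k : R) (N : nat) (f : C -> C) : Prop :=
  exists g : nat -> C -> C,
    (forall i, (1 <= i <= N)%nat -> is_modular_form (2 * i) (g i)) /\
    (forall z, upper_half z ->
       Cplus (SerreIter k N f z)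
         (fold_right Cplus (RtoC 0)
            (map (fun i => Cmult (g i z) (SerreIter k (N - i) f z)) (seq 1 N))) = RtoC 0).

(* E4 has a simple zero p in the upper half-plane at which E6 does not vanish, and vice versa; both are
   found by the intermediate value theorem on the lines Re z = -1/2 and Re z = 0, where q is real and the
   q-expansions are dominated by their linear terms.  If phi has a simple zero at p and psi(p) <> 0, then
   D_k^(j) (phi^m psi) = phi^(m-j) C_j with C_j holomorphic and C_j(p) <> 0 for j <= m, because at p only
   the term (m-j) phi' C_j of the derivative of phi^(m-j) C_j survives.  If the order N were at most m,
   the MLDE would read phi^(m-N) Psi = 0 with Psi(p) = C_N(p) <> 0, so phi would vanish near p,
   contradicting phi'(p) <> 0.  Applied to E4^m E6^n at both zeros this gives m < N and n < N. *)

From Stdlib Require Import Reals Lra Lia List ClassicalEpsilon.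
From Coquelicot Require Import Coquelicot.
Open Scope R_scope.

Notation is_Cderive := (@is_derive C_AbsRing C_NormedModule).

Lemma cderiv_unique (f : C -> C) z l : is_Cderive f z l -> cderiv f z = l.
Proof.
  intros Hf. unfold cderiv.
  pose proof (epsilon_spec (inhabits (RtoC 0)) (fun l => is_Cderive f z l) (ex_intro _ l Hf)) as Heps.
  now rewrite <- (is_C_derive_unique f z l Hf), (is_C_derive_unique f z _ Heps).
Qed.

Lemma is_Cderive_AbsRing (f : C -> C) z l :
  is_Cderive f z l <-> @is_derive C_AbsRing (AbsRing_NormedModule C_AbsRing) f z l.
Proof.
  split; intros [[Hplus Hscal [M HM]] Hlim]; repeat split; auto; exists M; exact HM.
Qed.

Lemma is_Cderive_quadratic (f : C -> C) z l d M : 0 < d ->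
  (forall w, Cmod (w - z) < d -> Cmod (f w - f z - (w - z) * l) <= M * Cmod (w - z) ^ 2) ->
  is_Cderive f z l.
Proof.
  intros Hd Hf. split; [apply is_linear_scal_l |].
  intros x Hx.
  apply (@is_filter_lim_locally_unique C_AbsRing (AbsRing_NormedModule C_AbsRing)) in Hx. subst x.
  intros eps. set (A := Rabs M + 1).
  assert (HA : 0 < A) by (pose proof (Rabs_pos M); unfold A; lra).
  assert (Hd' : 0 < Rmin d (eps / A))
    by (apply Rmin_pos; [lra | apply Rdiv_lt_0_compat; [apply cond_pos | lra]]).
  exists (mkposreal _ Hd'). intros w Hw. change (Cmod (w - z) < Rmin d (eps / A)) in Hw.
  change (Cmod (f w - f z - (w - z) * l) <= eps * Cmod (w - z)).
  pose proof (Cmod_ge_0 (w - z)). pose proof (Rmin_l d (eps / A)). pose proof (Rmin_r d (eps / A)).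
  assert (Hsmall : A * Cmod (w - z) <= eps).
  { apply Rle_trans with (A * (eps / A)); [apply Rmult_le_compat_l; lra | right; field; lra]. }
  eapply Rle_trans; [apply Hf; lra |].
  pose proof (Rle_abs M). simpl. unfold A in Hsmall. nra.
Qed.

Lemma is_Cderive_const (c : C) z : is_Cderive (fun _ => c) z (RtoC 0).
Proof. apply (is_derive_const c z). Qed.

Lemma is_Cderive_plus (f g : C -> C) z df dg : is_Cderive f z df -> is_Cderive g z dg ->
  is_Cderive (fun x => f x + g x)%C z (df + dg)%C.
Proof. apply (is_derive_plus f g z df dg). Qed.

Lemma is_Cderive_mult (f g : C -> C) z df dg : is_Cderive f z df -> is_Cderive g z dg ->
  is_Cderive (fun x => f x * g x)%C z (df * g z + f z * dg)%C.
Proof.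
  intros Hf Hg. apply is_Cderive_AbsRing.
  apply (is_derive_mult f g z df dg); try apply is_Cderive_AbsRing; auto. apply Cmult_comm.
Qed.

Lemma is_Cderive_comp (f g : C -> C) z df dg : is_Cderive f (g z) df -> is_Cderive g z dg ->
  is_Cderive (fun x => f (g x)) z (dg * df)%C.
Proof. intros Hf Hg. exact (is_derive_comp f g z df dg Hf (proj1 (is_Cderive_AbsRing _ _ _) Hg)). Qed.

Lemma is_Cderive_scal (c : C) z : is_Cderive (fun x => c * x)%C z c.
Proof.
  apply (is_Cderive_quadratic _ _ _ 1 0); [lra |]. intros w _.
  replace (c * w - c * z - (w - z) * c)%C with (RtoC 0) by ring. rewrite Cmod_0. lra.
Qed.

Lemma is_Cderive_continuous (f : C -> C) p l : is_Cderive f p l ->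
  forall e, 0 < e -> exists d, 0 < d /\ forall w, Cmod (w - p) < d -> Cmod (f w - f p) < e.
Proof.
  intros Hf e He.
  assert (Hs : 0 < e / sqrt 2) by (apply Rdiv_lt_0_compat; [lra | apply sqrt_lt_R0; lra]).
  destruct (proj1 (filterlim_locally _ _) (ex_derive_continuous f p (ex_intro _ l Hf)) (mkposreal _ Hs))
    as [d Hd].
  exists d. split; [apply cond_pos |]. intros w Hw.
  pose proof (C_NormedModule_mixin_compat2 _ _ _ (Hd w Hw)) as Hb. simpl in Hb.
  replace (sqrt 2 * (e / sqrt 2)) with e in Hb by (field; apply Rgt_not_eq, sqrt_lt_R0; lra).
  exact Hb.
Qed.

(** * The complex exponential and [q = e^(2 pi i z)] *)

Lemma Rabs_MVT_origin (f f' : R -> R) M k :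
  (forall x, derivable_pt_lim f x (f' x)) -> f 0 = 0 ->
  (forall x, Rabs x <= 1 -> Rabs (f' x) <= M * Rabs x ^ k) ->
  forall x, Rabs x <= 1 -> Rabs (f x) <= M * Rabs x ^ S k.
Proof.
  intros Hd H0 Hb x Hx.
  destruct (MVT_abs f f' 0 x (fun c _ => Hd c)) as [c [Hc Hr]].
  rewrite H0, !Rminus_0_r in Hc. rewrite Hc.
  assert (Hcx : Rabs c <= Rabs x) by (unfold Rmin, Rmax in Hr; destruct (Rle_dec 0 x); split_Rabs; lra).
  assert (HM : 0 <= M).
  { specialize (Hb 1 ltac:(rewrite Rabs_R1; lra)). rewrite Rabs_R1, pow1 in Hb.
    pose proof (Rabs_pos (f' 1)). lra. }
  rewrite <- tech_pow_Rmult, (Rmult_comm (Rabs x)), <- Rmult_assoc.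
  apply Rmult_le_compat_r; [apply Rabs_pos |].
  eapply Rle_trans; [apply Hb; lra |].
  apply Rmult_le_compat_l; [lra |]. apply pow_incr. split; [apply Rabs_pos | lra].
Qed.

Lemma exp_le_3_of_le_1 x : x <= 1 -> exp x <= 3.
Proof.
  intros Hx. pose proof exp_le_3. destruct (Req_dec x 1) as [-> | Hne]; [lra |].
  pose proof (exp_increasing x 1). lra.
Qed.

Lemma Rabs_exp_sub_1 x : Rabs x <= 1 -> Rabs (exp x - 1) <= 3 * Rabs x.
Proof.
  intros Hx. rewrite <- (pow_1 (Rabs x)).
  apply (Rabs_MVT_origin (fun x => exp x - 1) exp 3 0); auto.
  - intros y. apply is_derive_Reals. auto_derive; auto; ring.
  - rewrite exp_0. ring.
  - intros y Hy. rewrite Rabs_right by (left; apply exp_pos). simpl. rewrite Rmult_1_r.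
    apply exp_le_3_of_le_1. revert Hy. split_Rabs; lra.
Qed.

Lemma Rabs_exp_taylor x : Rabs x <= 1 -> Rabs (exp x - 1 - x) <= 3 * Rabs x ^ 2.
Proof.
  apply (Rabs_MVT_origin (fun x => exp x - 1 - x) (fun x => exp x - 1) 3 1).
  - intros y. apply is_derive_Reals. auto_derive; auto; ring.
  - rewrite exp_0. ring.
  - intros y Hy. rewrite pow_1. now apply Rabs_exp_sub_1.
Qed.

Lemma Rabs_sin_le x : Rabs (sin x) <= Rabs x.
Proof.
  destruct (MVT_abs sin cos 0 x (fun c _ => derivable_pt_lim_sin c)) as [c [Hc _]].
  rewrite sin_0, !Rminus_0_r in Hc. rewrite Hc.
  pose proof (COS_bound c). rewrite <- (Rmult_1_l (Rabs x)) at 2.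
  apply Rmult_le_compat_r; [apply Rabs_pos | apply Rabs_le; lra].
Qed.

Lemma Rabs_cos_sub_1 x : Rabs x <= 1 -> Rabs (cos x - 1) <= Rabs x ^ 2.
Proof.
  intros Hx. rewrite <- (Rmult_1_l (Rabs x ^ 2)).
  apply (Rabs_MVT_origin (fun x => cos x - 1) (fun x => - sin x) 1 1); auto.
  - intros y. apply is_derive_Reals. auto_derive; auto; ring.
  - rewrite cos_0. ring.
  - intros y _. rewrite Rabs_Ropp, pow_1, Rmult_1_l. apply Rabs_sin_le.
Qed.

Lemma Rabs_sin_taylor x : Rabs x <= 1 -> Rabs (sin x - x) <= Rabs x ^ 2.
Proof.
  intros Hx. rewrite <- (Rmult_1_l (Rabs x ^ 2)).
  apply (Rabs_MVT_origin (fun x => sin x - x) (fun x => cos x - 1) 1 1); auto.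
  - intros y. apply is_derive_Reals. auto_derive; auto; ring.
  - rewrite sin_0. ring.
  - intros y Hy. rewrite pow_1, Rmult_1_l. eapply Rle_trans; [now apply Rabs_cos_sub_1 |].
    pose proof (Rabs_pos y). simpl. nra.
Qed.

Lemma im_le_Cmod (c : C) : Rabs (Im c) <= Cmod c.
Proof. eapply Rle_trans; [apply Rmax_r | apply Rmax_Cmod]. Qed.

Lemma Cmod_le_Re_Im (x : C) : Cmod x <= Rabs (Re x) + Rabs (Im x).
Proof.
  unfold Re, Im. pose proof (Rabs_pos (fst x)). pose proof (Rabs_pos (snd x)).
  rewrite <- (sqrt_pow2 (Rabs (fst x) + Rabs (snd x))) by lra.
  unfold Cmod. apply sqrt_le_1_alt.
  pose proof (Rsqr_abs (fst x)). pose proof (Rsqr_abs (snd x)). unfold Rsqr in *. simpl. nra.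
Qed.

Lemma cexp_plus a b : cexp (a + b) = (cexp a * cexp b)%C.
Proof.
  destruct a as [a1 a2], b as [b1 b2]. unfold cexp, Cplus, Cmult; simpl.
  rewrite exp_plus, cos_plus, sin_plus. f_equal; ring.
Qed.

Lemma cexp_taylor h : Cmod h <= 1 -> Cmod (cexp h - 1 - h) <= 6 * Cmod h ^ 2.
Proof.
  intros Hh. destruct h as [a b].
  assert (Ha : Rabs a <= 1) by (pose proof (re_le_Cmod (a, b)); simpl in *; lra).
  assert (Hb : Rabs b <= 1) by (pose proof (im_le_Cmod (a, b)); simpl in *; lra).
  rewrite Cmod2_alt. eapply Rle_trans; [apply Cmod_le_Re_Im |]. unfold cexp. simpl.
  replace (exp a * cos b + - (1) + - a) with ((exp a - 1 - a) + exp a * (cos b - 1)) by ring.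
  replace (exp a * sin b + - 0 + - b) with ((exp a - 1) * sin b + (sin b - b)) by ring.
  pose proof (Rabs_exp_sub_1 a Ha). pose proof (Rabs_exp_taylor a Ha).
  pose proof (Rabs_cos_sub_1 b Hb). pose proof (Rabs_sin_le b). pose proof (Rabs_sin_taylor b Hb).
  assert (Hea : exp a <= 3) by (apply exp_le_3_of_le_1; revert Ha; split_Rabs; lra).
  pose proof (exp_pos a). pose proof (Rabs_pos a). pose proof (Rabs_pos b).
  pose proof (Rabs_pos (cos b - 1)). pose proof (Rabs_pos (exp a - 1)). pose proof (Rabs_pos (sin b)).
  replace (a * (a * 1) + b * (b * 1)) with (Rabs a ^ 2 + Rabs b ^ 2)
    by (pose proof (Rsqr_abs a); pose proof (Rsqr_abs b); unfold Rsqr in *; simpl; lra).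
  pose proof (Rabs_triang (exp a - 1 - a) (exp a * (cos b - 1))).
  pose proof (Rabs_triang ((exp a - 1) * sin b) (sin b - b)).
  rewrite !Rabs_mult, (Rabs_right (exp a)) in * by lra.
  assert (exp a * Rabs (cos b - 1) <= 3 * Rabs b ^ 2) by (apply Rmult_le_compat; lra).
  assert (Rabs (exp a - 1) * Rabs (sin b) <= 3 * Rabs a * Rabs b) by (apply Rmult_le_compat; lra).
  assert (2 * (Rabs a * Rabs b) <= Rabs a ^ 2 + Rabs b ^ 2)
    by (pose proof (pow2_ge_0 (Rabs a - Rabs b)); simpl in *; nra).
  pose proof (pow2_ge_0 (Rabs a)). pose proof (pow2_ge_0 (Rabs b)). lra.
Qed.

Lemma is_Cderive_cexp z : is_Cderive cexp z (cexp z).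
Proof.
  apply (is_Cderive_quadratic _ _ _ 1 (Cmod (cexp z) * 6)); [lra |].
  intros w Hw. replace w with (z + (w - z))%C at 1 by ring. rewrite cexp_plus.
  replace (cexp z * cexp (w - z) - cexp z - (w - z) * cexp z)%C
    with (cexp z * (cexp (w - z) - 1 - (w - z)))%C by ring.
  rewrite Cmod_mult, Rmult_assoc. apply Rmult_le_compat_l; [apply Cmod_ge_0 |].
  apply cexp_taylor. lra.
Qed.

Definition two_pi_i : C := (RtoC (2 * PI) * Ci)%C.

Lemma two_pi_i_neq_0 : two_pi_i <> RtoC 0.
Proof.
  intros H. apply (f_equal snd) in H. unfold two_pi_i in H. simpl in H. pose proof PI_RGT_0. nra.
Qed.

Lemma is_Cderive_qvar z : is_Cderive qvar z (two_pi_i * qvar z)%C.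
Proof.
  apply (is_Cderive_comp cexp (fun x => RtoC (2 * PI) * (Ci * x))%C z); [apply is_Cderive_cexp |].
  eapply is_derive_ext; [| apply (is_Cderive_scal two_pi_i z)]. intros t. symmetry. apply Cmult_assoc.
Qed.

Lemma Cmod_qvar z : Cmod (qvar z) = exp (- (2 * PI) * Im z).
Proof.
  unfold qvar, cexp, Cmod. cbn [fst snd].
  set (x := Re _). set (y := Im _).
  replace ((exp x * cos y) ^ 2 + (exp x * sin y) ^ 2) with (exp x ^ 2)
    by (pose proof (sin2_cos2 y) as Hsc; unfold Rsqr in Hsc; nra).
  rewrite sqrt_pow2 by (left; apply exp_pos). f_equal. destruct z as [z1 z2]. unfold x, Re, Im. simpl. ring.
Qed.

Lemma Cmod_qvar_lt_1 z : upper_half z -> Cmod (qvar z) < 1.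
Proof.
  intros Hz. unfold upper_half in Hz. rewrite Cmod_qvar, <- exp_0. apply exp_increasing.
  pose proof PI_RGT_0. nra.
Qed.

Lemma upper_half_locally z : upper_half z -> @locally (AbsRing_UniformSpace C_AbsRing) z upper_half.
Proof.
  intros Hz. exists (mkposreal (Im z) Hz). intros w Hw.
  change (Cmod (w - z) < Im z) in Hw. pose proof (im_le_Cmod (w - z)) as Him.
  unfold upper_half. revert Hw Him. unfold Im, Cminus, Cplus, Copp. simpl. split_Rabs; lra.
Qed.

Definition abs_summable (b : nat -> C) : Prop := ex_series (fun n => Cmod (b n)).

Lemma ex_series_Rabs_le (a b : nat -> R) : (forall n, Rabs (a n) <= b n) -> ex_series b -> ex_series a.
Proof. intros Hab Hb. apply (ex_series_le (V := R_CompleteNormedModule) a b); [apply Hab | exact Hb]. Qed.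

Lemma ex_series_scal_R (c : R) (a : nat -> R) : ex_series a -> ex_series (fun n => c * a n).
Proof. apply (@ex_series_scal_l R_AbsRing R_NormedModule c a). Qed.

Lemma abs_summable_le (b : nat -> C) (c : nat -> R) :
  (forall n, Cmod (b n) <= c n) -> ex_series c -> abs_summable b.
Proof.
  intros Hbc. apply ex_series_Rabs_le. intros n. rewrite Rabs_right by (apply Rle_ge, Cmod_ge_0). apply Hbc.
Qed.

Lemma abs_summable_Re b : abs_summable b -> ex_series (fun n => Re (b n)).
Proof. apply ex_series_Rabs_le. intros n. apply re_le_Cmod. Qed.

Lemma abs_summable_Im b : abs_summable b -> ex_series (fun n => Im (b n)).
Proof. apply ex_series_Rabs_le. intros n. apply im_le_Cmod. Qed.

Lemma abs_summable_scal k b : abs_summable b -> abs_summable (fun n => k * b n)%C.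
Proof.
  intros Hb. apply (abs_summable_le _ (fun n => Cmod k * Cmod (b n))); [| now apply ex_series_scal_R].
  intros n. rewrite Cmod_mult. lra.
Qed.

Lemma abs_summable_minus b c : abs_summable b -> abs_summable c -> abs_summable (fun n => b n - c n)%C.
Proof.
  intros Hb Hc.
  apply (abs_summable_le _ (fun n => Cmod (b n) + Cmod (c n)));
    [| now apply (@ex_series_plus R_AbsRing R_NormedModule)].
  intros n. eapply Rle_trans; [apply Cmod_triangle |]. rewrite Cmod_opp. lra.
Qed.

Lemma CSeries_ext b c : (forall n, b n = c n) -> CSeries b = CSeries c.
Proof. intros Hbc. unfold CSeries. f_equal; apply Series_ext; intros n; now rewrite Hbc. Qed.

Lemma CSeries_scal k b : abs_summable b -> CSeries (fun n => k * b n)%C = (k * CSeries b)%C.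
Proof.
  intros Hb. pose proof (abs_summable_Re b Hb). pose proof (abs_summable_Im b Hb).
  unfold CSeries, Cmult. simpl. f_equal.
  - rewrite <- !Series_scal_l, <- Series_minus by now apply ex_series_scal_R. now apply Series_ext.
  - rewrite <- !Series_scal_l, <- Series_plus by now apply ex_series_scal_R. now apply Series_ext.
Qed.

Lemma CSeries_minus b c : abs_summable b -> abs_summable c ->
  CSeries (fun n => b n - c n)%C = (CSeries b - CSeries c)%C.
Proof.
  intros Hb Hc. unfold CSeries, Cminus, Cplus, Copp. simpl. f_equal.
  - rewrite <- Series_opp, <- Series_plus; [now apply Series_ext | now apply abs_summable_Re |].
    apply (@ex_series_opp R_AbsRing R_NormedModule). now apply abs_summable_Re.
  - rewrite <- Series_opp, <- Series_plus; [now apply Series_ext | now apply abs_summable_Im |].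
    apply (@ex_series_opp R_AbsRing R_NormedModule). now apply abs_summable_Im.
Qed.

Lemma Cmod_CSeries_le (b : nat -> C) (c : nat -> R) :
  (forall n, Cmod (b n) <= c n) -> ex_series c -> Cmod (CSeries b) <= 2 * Series c.
Proof.
  intros Hbc Hc.
  assert (Hpart : forall part : C -> R, (forall x, Rabs (part x) <= Cmod x) ->
    Rabs (Series (fun n => part (b n))) <= Series c).
  { intros part Hpart.
    assert (Habs : ex_series (fun n => Rabs (part (b n)))).
    { apply ex_series_Rabs_le with c; [| exact Hc]. intros n. rewrite Rabs_Rabsolu.
      eapply Rle_trans; [apply Hpart | apply Hbc]. }
    eapply Rle_trans; [now apply Series_Rabs |]. apply Series_le; [| exact Hc].
    intros n. split; [apply Rabs_pos | eapply Rle_trans; [apply Hpart | apply Hbc]]. }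
  eapply Rle_trans; [apply Cmod_le_Re_Im |]. unfold CSeries. simpl.
  pose proof (Hpart Re re_le_Cmod). pose proof (Hpart Im im_le_Cmod). lra.
Qed.

(** * Power series in [q] *)

Lemma is_lim_seq_pow (u : nat -> R) (l : R) K : is_lim_seq u l -> is_lim_seq (fun n => u n ^ K) (l ^ K).
Proof.
  intros Hu. induction K as [| K IH]; [apply is_lim_seq_const |].
  apply (is_lim_seq_mult' u (fun n => u n ^ K)); assumption.
Qed.

Lemma is_lim_seq_1_plus_inv_S : is_lim_seq (fun n => 1 + / INR (S n)) 1.
Proof.
  replace (Finite 1) with (Finite (1 + 0)) by (f_equal; ring).
  apply is_lim_seq_plus'; [apply is_lim_seq_const |].
  apply (is_lim_seq_incr_1 (fun n => / INR n) 0).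
  replace (Finite 0) with (Rbar_inv p_infty) by reflexivity.
  apply is_lim_seq_inv; [apply is_lim_seq_INR | discriminate].
Qed.

Lemma ex_series_poly_geom K r : 0 <= r < 1 -> ex_series (fun j => INR (S j) ^ K * r ^ j).
Proof.
  intros Hr.
  assert (Hpos : forall j, 0 < INR (S j) ^ K) by (intros j; apply pow_lt, lt_0_INR; lia).
  assert (Hrad : CV_radius (fun j => INR (S j) ^ K) = 1).
  { rewrite <- Rinv_1. apply CV_radius_finite_DAlembert; [intros j; specialize (Hpos j); lra | lra |].
    apply is_lim_seq_ext with (fun n => (1 + / INR (S n)) ^ K).
    - intros n. pose proof (Hpos n). pose proof (Hpos (S n)). pose proof (lt_0_INR (S n) ltac:(lia)).
      rewrite Rabs_right by (apply Rle_ge, Rlt_le, Rdiv_lt_0_compat; lra).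
      unfold Rdiv. rewrite <- pow_inv, <- Rpow_mult_distr. f_equal.
      rewrite (S_INR (S n)). field. lra.
    - replace (Finite 1) with (Finite (1 ^ K)) by now rewrite pow1.
      apply is_lim_seq_pow, is_lim_seq_1_plus_inv_S. }
  apply ex_series_Rabs. apply CV_disk_inside. rewrite Hrad, Rabs_right by lra. simpl. lra.
Qed.

Definition pser (a : nat -> C) (w : C) : C := CSeries (fun j => a j * w ^ S j)%C.

Definition poly_bounded (a : nat -> C) : Prop := exists K M, forall j, Cmod (a j) <= M * INR (S j) ^ K.

Lemma abs_summable_poly_geom a k w : poly_bounded a -> Cmod w < 1 ->
  abs_summable (fun j => a j * INR (S j) ^ k * w ^ j)%C.
Proof.
  intros [K [M Ha]] Hw.
  apply (abs_summable_le _ (fun j => M * (INR (S j) ^ (K + k) * Cmod w ^ j))).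
  - intros j. rewrite !Cmod_mult, !Cmod_pow, Cmod_R, Rabs_right by (apply Rle_ge, pos_INR).
    rewrite pow_add, <- !Rmult_assoc.
    apply Rmult_le_compat_r; [apply pow_le, Cmod_ge_0 |].
    apply Rmult_le_compat_r; [apply pow_le, pos_INR | apply Ha].
  - apply ex_series_scal_R, ex_series_poly_geom. split; [apply Cmod_ge_0 | exact Hw].
Qed.

Lemma abs_summable_pser a w : poly_bounded a -> Cmod w < 1 -> abs_summable (fun j => a j * w ^ S j)%C.
Proof.
  intros Ha Hw.
  apply (abs_summable_le _ (fun j => Cmod (w * (a j * INR (S j) ^ 0 * w ^ j))%C));
    [| apply abs_summable_scal, abs_summable_poly_geom; assumption].
  intros j. right. f_equal. simpl. ring.
Qed.

Lemma abs_summable_pser_deriv a w : poly_bounded a -> Cmod w < 1 ->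
  abs_summable (fun j => a j * INR (S j) * w ^ j)%C.
Proof.
  intros Ha Hw. apply (abs_summable_le _ (fun j => Cmod (a j * INR (S j) ^ 1 * w ^ j)%C));
    [intros j; rewrite Cpow_1_r; lra | now apply abs_summable_poly_geom].
Qed.

Lemma Cpow_taylor_bound (w w0 : C) r k : 0 <= r -> Cmod w <= r -> Cmod w0 <= r ->
  r * Cmod (w ^ S k - w0 ^ S k - INR (S k) * (w - w0) * w0 ^ k)%C
    <= INR (S k) ^ 2 * r ^ k * Cmod (w - w0) ^ 2.
Proof.
  intros Hr Hw Hw0. set (h := (w - w0)%C). pose proof (Cmod_ge_0 h).
  induction k as [| k IH].
  - replace (w ^ 1 - w0 ^ 1 - INR 1 * h * w0 ^ 0)%C with (RtoC 0) by (unfold h; simpl; ring).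
    rewrite Cmod_0. simpl. nra.
  - set (n := INR (S k)). set (E := (w ^ S k - w0 ^ S k - n * h * w0 ^ k)%C) in IH.
    replace (w ^ S (S k) - w0 ^ S (S k) - INR (S (S k)) * h * w0 ^ S k)%C
      with (w * E + n * (h * h) * w0 ^ k)%C
      by (unfold E, n, h; rewrite (S_INR (S k)), RtoC_plus; simpl; ring).
    rewrite (S_INR (S k)). fold n.
    assert (Hn : 0 <= n) by apply pos_INR.
    assert (Hpow : Cmod (w0 ^ k)%C <= r ^ k)
      by (rewrite Cmod_pow; apply pow_incr; split; [apply Cmod_ge_0 | exact Hw0]).
    assert (HE : Cmod (w * E + n * (h * h) * w0 ^ k)%C <= r * Cmod E + n * Cmod h ^ 2 * r ^ k).
    { eapply Rle_trans; [apply Cmod_triangle |]. rewrite !Cmod_mult, Cmod_R, Rabs_right by lra.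
      pose proof (Cmod_ge_0 E). pose proof (Cmod_ge_0 (w0 ^ k)%C).
      apply Rplus_le_compat; [apply Rmult_le_compat_r; lra |].
      replace (n * Cmod h ^ 2) with (n * (Cmod h * Cmod h)) by ring.
      apply Rmult_le_compat_l; [nra | exact Hpow]. }
    assert (IH' : r * Cmod E <= n ^ 2 * r ^ k * Cmod h ^ 2) by exact IH.
    assert (Hlin : r * (r * Cmod E) <= r * (n ^ 2 * r ^ k * Cmod h ^ 2)) by (apply Rmult_le_compat_l; lra).
    assert (Hpos : 0 <= r * (r ^ k * Cmod h ^ 2))
      by (apply Rmult_le_pos, Rmult_le_pos; [lra | apply pow_le; lra | apply pow2_ge_0]).
    apply Rle_trans with (r * (r * Cmod E + n * Cmod h ^ 2 * r ^ k)); [apply Rmult_le_compat_l; lra |].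
    change (r ^ S k) with (r * r ^ k). nra.
Qed.

Lemma pser_taylor_remainder a w w0 : poly_bounded a -> Cmod w < 1 -> Cmod w0 < 1 ->
  (pser a w - pser a w0 - (w - w0) * CSeries (fun j => a j * INR (S j) * w0 ^ j))%C
  = CSeries (fun j => a j * (w ^ S j - w0 ^ S j - INR (S j) * (w - w0) * w0 ^ j))%C.
Proof.
  intros Ha Hw Hw0. pose proof (abs_summable_pser_deriv a w0 Ha Hw0).
  unfold pser. rewrite <- CSeries_scal, <- !CSeries_minus by
    (try apply abs_summable_minus; try apply abs_summable_scal; now try apply abs_summable_pser).
  apply CSeries_ext. intros j. ring.
Qed.

Lemma is_Cderive_pser a w0 : poly_bounded a -> Cmod w0 < 1 ->
  is_Cderive (pser a) w0 (CSeries (fun j => a j * INR (S j) * w0 ^ j))%C.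
Proof.
  intros Ha Hw0. pose proof Ha as [K [M HM]].
  set (r := (1 + Cmod w0) / 2).
  assert (Hr : 1 / 2 <= r < 1) by (pose proof (Cmod_ge_0 w0); unfold r; lra).
  apply (is_Cderive_quadratic _ _ _ ((1 - Cmod w0) / 2)
           (4 * M * Series (fun j => INR (S j) ^ (K + 2) * r ^ j))); [lra |].
  intros w Hw.
  assert (Hwr : Cmod w <= r).
  { replace w with (w0 + (w - w0))%C by ring. eapply Rle_trans; [apply Cmod_triangle | unfold r; lra]. }
  rewrite pser_taylor_remainder by (auto; lra).
  eapply Rle_trans.
  - apply (Cmod_CSeries_le _ (fun j => 2 * M * Cmod (w - w0) ^ 2 * (INR (S j) ^ (K + 2) * r ^ j))).
    + intros j. rewrite Cmod_mult. set (h2 := Cmod (w - w0) ^ 2).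
      assert (HE : Cmod (w ^ S j - w0 ^ S j - INR (S j) * (w - w0) * w0 ^ j)%C
                   <= 2 * (INR (S j) ^ 2 * r ^ j * h2)).
      { pose proof (Cpow_taylor_bound w w0 r j ltac:(lra) Hwr ltac:(unfold r; lra)) as Hj.
        assert (0 <= INR (S j) ^ 2 * r ^ j * h2)
          by (apply Rmult_le_pos; [apply Rmult_le_pos |];
              [apply pow2_ge_0 | apply pow_le; lra | apply pow2_ge_0]).
        apply (Rmult_le_reg_l r); [lra |]. fold h2 in Hj. nra. }
      eapply Rle_trans;
        [apply Rmult_le_compat; [apply Cmod_ge_0 | apply Cmod_ge_0 | apply HM | exact HE] |].
      rewrite pow_add. right. ring.
    + apply ex_series_scal_R, ex_series_poly_geom. lra.
  - rewrite Series_scal_l. right. ring.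
Qed.

Lemma poly_bounded_scal (c : C) a : poly_bounded a -> poly_bounded (fun j => c * a j)%C.
Proof.
  intros [K [M Ha]]. exists K, (Cmod c * M). intros j.
  rewrite Cmod_mult, Rmult_assoc. apply Rmult_le_compat_l; [apply Cmod_ge_0 | apply Ha].
Qed.

Lemma poly_bounded_Sj a : poly_bounded a -> poly_bounded (fun j => INR (S j) * a j)%C.
Proof.
  intros [K [M Ha]]. exists (S K), M. intros j.
  rewrite Cmod_mult, Cmod_R, Rabs_right by (apply Rle_ge, pos_INR).
  apply Rle_trans with (INR (S j) * (M * INR (S j) ^ K));
    [apply Rmult_le_compat_l; [apply pos_INR | apply Ha] |].
  right. simpl. ring.
Qed.

Lemma pser_scal c a w : poly_bounded a -> Cmod w < 1 -> pser (fun j => c * a j)%C w = (c * pser a w)%C.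
Proof.
  intros Ha Hw. unfold pser. rewrite <- CSeries_scal by now apply abs_summable_pser.
  apply CSeries_ext. intros j. ring.
Qed.

Definition qcoef_deriv (a : nat -> C) (j : nat) : C := (two_pi_i * (INR (S j) * a j))%C.

Lemma poly_bounded_qcoef_deriv a : poly_bounded a -> poly_bounded (qcoef_deriv a).
Proof. intros Ha. now apply poly_bounded_scal, poly_bounded_Sj. Qed.

Lemma is_Cderive_pser_qvar a z : poly_bounded a -> upper_half z ->
  is_Cderive (fun x => pser a (qvar x)) z (pser (qcoef_deriv a) (qvar z)).
Proof.
  intros Ha Hz. pose proof (Cmod_qvar_lt_1 z Hz) as Hq.
  replace (pser (qcoef_deriv a) (qvar z))
    with (two_pi_i * qvar z * CSeries (fun j => a j * INR (S j) * qvar z ^ j))%C.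
  - apply (is_Cderive_comp (pser a) qvar); [now apply is_Cderive_pser | apply is_Cderive_qvar].
  - rewrite <- CSeries_scal by now apply abs_summable_pser_deriv.
    apply CSeries_ext. intros j. unfold qcoef_deriv. simpl. ring.
Qed.

(** * Expressions in [q] and their [z]-derivatives *)

(* Holomorphic functions on the upper half-plane built from q-series [QSer a = sum_j a_j q^(j+1)]
   by constants, sums and products; this class is closed under d/dz, computed syntactically by [qddz]. *)
Inductive qexpr : Type :=
| QSer (a : nat -> C)
| QCst (c : C)
| QAdd (e1 e2 : qexpr)
| QMul (e1 e2 : qexpr).

Fixpoint qeval (e : qexpr) (z : C) : C :=
  match e with
  | QSer a => pser a (qvar z)
  | QCst c => c
  | QAdd e1 e2 => (qeval e1 z + qeval e2 z)%C
  | QMul e1 e2 => (qeval e1 z * qeval e2 z)%C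
  end.

Fixpoint qddz (e : qexpr) : qexpr :=
  match e with
  | QSer a => QSer (qcoef_deriv a)
  | QCst _ => QCst 0
  | QAdd e1 e2 => QAdd (qddz e1) (qddz e2)
  | QMul e1 e2 => QAdd (QMul (qddz e1) e2) (QMul e1 (qddz e2))
  end.

Fixpoint qwf (e : qexpr) : Prop :=
  match e with
  | QSer a => poly_bounded a
  | QCst _ => True
  | QAdd e1 e2 | QMul e1 e2 => qwf e1 /\ qwf e2
  end.

Lemma qwf_qddz e : qwf e -> qwf (qddz e).
Proof. induction e; simpl; intuition. now apply poly_bounded_qcoef_deriv. Qed.

Lemma is_Cderive_qeval e z : qwf e -> upper_half z -> is_Cderive (qeval e) z (qeval (qddz e) z).
Proof.
  intros He Hz. induction e; simpl in *.
  - now apply is_Cderive_pser_qvar.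
  - apply is_Cderive_const.
  - destruct He. apply is_Cderive_plus; auto.
  - destruct He. apply is_Cderive_mult; auto.
Qed.

Fixpoint QPow (e : qexpr) (n : nat) : qexpr :=
  match n with
  | O => QCst 1
  | S n => QMul e (QPow e n)
  end.

Lemma qeval_QPow e n z : qeval (QPow e n) z = (qeval e z ^ n)%C.
Proof. induction n as [| n IH]; simpl; [reflexivity | now rewrite IH]. Qed.

Lemma qwf_QPow e n : qwf e -> qwf (QPow e n).
Proof. induction n; simpl; auto. Qed.

Lemma qeval_qddz_QPow e n z :
  qeval (qddz (QPow e (S n))) z = (INR (S n) * qeval e z ^ n * qeval (qddz e) z)%C.
Proof.
  induction n as [| n IH]; [simpl; ring |].
  change (qeval (qddz (QPow e (S (S n)))) z)
    with (qeval (qddz e) z * qeval (QPow e (S n)) z + qeval e z * qeval (qddz (QPow e (S n))) z)%C.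
  rewrite IH, qeval_QPow, (S_INR (S n)), RtoC_plus. simpl. ring.
Qed.

Lemma fold_Rplus_map_bound (f : nat -> R) M l : (forall d, In d l -> 0 <= f d <= M) ->
  0 <= fold_right Rplus 0 (map f l) <= INR (length l) * M.
Proof.
  induction l as [| x l IH]; intros Hf; cbn [map fold_right length]; [simpl; lra |].
  destruct (Hf x (or_introl eq_refl)).
  assert (0 <= fold_right Rplus 0 (map f l) <= INR (length l) * M)
    by (apply IH; intros; apply Hf; now right).
  rewrite S_INR. lra.
Qed.

Lemma sigma_bound k n : 0 <= sigma k n <= INR n ^ S k.
Proof.
  unfold sigma.
  pose proof (fold_Rplus_map_bound (fun d => if Nat.eqb (n mod d) 0 then INR d ^ k else 0)
                                   (INR n ^ k) (seq 1 n)) as Hb.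
  rewrite length_seq in Hb. simpl pow. apply Hb.
  intros d Hd. apply in_seq in Hd. pose proof (pow_le (INR n) k (pos_INR n)).
  destruct (Nat.eqb (n mod d) 0); [| lra].
  split; [apply pow_le, pos_INR | apply pow_incr; split; [apply pos_INR | apply le_INR; lia]].
Qed.

Lemma sigma_1 k : sigma k 1 = 1.
Proof. unfold sigma. simpl. rewrite pow1. ring. Qed.

Lemma poly_bounded_sigma k : poly_bounded (fun j => RtoC (sigma k (S j))).
Proof.
  exists (S k), 1. intros j. rewrite Cmod_R, Rmult_1_l, Rabs_right by apply Rle_ge, sigma_bound.
  apply sigma_bound.
Qed.

Definition eis (c : R) (k : nat) : qexpr :=
  QAdd (QCst 1) (QMul (QCst c) (QSer (fun j => RtoC (sigma (k - 1) (S j))))).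

Lemma qwf_eis c k : qwf (eis c k).
Proof. simpl. repeat split. apply poly_bounded_sigma. Qed.

(** * Serre derivatives of [phi^m psi] at a simple zero of [phi] *)

Lemma cderiv_upper_half (f g : C -> C) z l : upper_half z ->
  (forall w, upper_half w -> f w = g w) -> is_Cderive g z l -> cderiv f z = l.
Proof.
  intros Hz Hfg Hg. apply cderiv_unique. apply (is_derive_ext_loc g f); [| exact Hg].
  destruct (upper_half_locally z Hz) as [e He]. exists e. intros y Hy. symmetry. now apply Hfg, He.
Qed.

(* [serre_cofactor k m phi psi j] is the [C_j] of [D_k^(j) (phi^m psi) = phi^(m-j) C_j]: applying
   D_(k+2j) = (2 pi i)^-1 d/dz - (k+2j)/12 E2 to [phi^(m-j) C_j] gives [phi^(m-j-1)] times the next one. *)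
Fixpoint serre_cofactor (k : R) (m : nat) (phi psi : qexpr) (j : nat) : qexpr :=
  match j with
  | O => psi
  | S j =>
      QAdd (QMul (QCst (INR (m - j) / two_pi_i)) (QMul (qddz phi) (serre_cofactor k m phi psi j)))
           (QMul phi (QAdd (QMul (QCst (/ two_pi_i)) (qddz (serre_cofactor k m phi psi j)))
                           (QMul (QCst (RtoC (- ((k + 2 * INR j) / 12))))
                                 (QMul (eis (-24) 2) (serre_cofactor k m phi psi j)))))
  end.

Lemma qwf_serre_cofactor k m phi psi j : qwf phi -> qwf psi -> qwf (serre_cofactor k m phi psi j).
Proof.
  intros Hphi Hpsi. pose proof (qwf_eis (-24) 2).
  induction j; cbn [serre_cofactor qwf]; [assumption |].
  repeat match goal with |- _ /\ _ => split end; auto using qwf_qddz.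
Qed.

Lemma SerreIter_factor k m phi psi (F : C -> C) :
  qwf phi -> qwf psi -> (forall z, F z = (qeval phi z ^ m * qeval psi z)%C) ->
  forall j, (j <= m)%nat -> forall z, upper_half z ->
  SerreIter k j F z = (qeval phi z ^ (m - j) * qeval (serre_cofactor k m phi psi j) z)%C.
Proof.
  intros Hphi Hpsi HF j. induction j as [| j IH]; intros Hj z Hz.
  - simpl. now rewrite HF, Nat.sub_0_r.
  - set (G := QMul (QPow phi (S (m - S j))) (serre_cofactor k m phi psi j)).
    assert (HG : forall w, upper_half w -> SerreIter k j F w = qeval G w).
    { intros w Hw. rewrite IH by (auto; lia). unfold G. cbn [qeval]. rewrite qeval_QPow.
      now replace (m - j)%nat with (S (m - S j)) by lia. }
    simpl SerreIter. unfold Serre, qderiv. rewrite HG by assumption.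
    rewrite (cderiv_upper_half _ (qeval G) z (qeval (qddz G) z) Hz HG).
    2: { apply is_Cderive_qeval; [split; [apply qwf_QPow | apply qwf_serre_cofactor] | ]; assumption. }
    unfold G. cbn [qddz qeval]. rewrite qeval_qddz_QPow, !qeval_QPow. cbn [serre_cofactor qeval].
    replace (m - j)%nat with (S (m - S j)) by lia. rewrite RtoC_opp. simpl Cpow.
    change (qeval (eis (-24) 2) z) with (E2 z).
    fold two_pi_i. generalize (qeval phi z ^ (m - S j))%C. intros P. field. apply two_pi_i_neq_0.
Qed.

Lemma serre_cofactor_neq_0 k m phi psi p :
  qeval phi p = RtoC 0 -> qeval (qddz phi) p <> RtoC 0 -> qeval psi p <> RtoC 0 ->
  forall j, (j <= m)%nat -> qeval (serre_cofactor k m phi psi j) p <> RtoC 0.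
Proof.
  intros Hzero Hsimple Hpsi j. induction j as [| j IH]; intros Hj; [exact Hpsi |].
  cbn [serre_cofactor qeval]. rewrite Hzero, Cmult_0_l, Cplus_0_r.
  repeat apply Cmult_neq_0; [| | exact Hsimple | apply IH; lia].
  - intros H. apply RtoC_inj, not_0_INR in H; [exact H | lia].
  - intros H. apply C1_nz. rewrite <- (Cinv_r two_pi_i two_pi_i_neq_0), H. ring.
Qed.

Lemma is_Cderive_eq_0_of_pow_mul (f g : C -> C) p a df dg : upper_half p ->
  is_Cderive f p df -> is_Cderive g p dg -> g p <> RtoC 0 ->
  (forall z, upper_half z -> (f z ^ a * g z)%C = RtoC 0) -> df = RtoC 0.
Proof.
  intros Hp Hf Hg Hgp Hfg.
  destruct (is_Cderive_continuous g p dg Hg (Cmod (g p))) as [d [Hd Hnear]]; [now apply Cmod_gt_0 |].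
  destruct (upper_half_locally p Hp) as [e He].
  assert (Hde : 0 < Rmin d e) by (apply Rmin_pos; [lra | apply cond_pos]).
  assert (Hloc : @locally (AbsRing_UniformSpace C_AbsRing) p (fun w => RtoC 0 = f w)).
  { exists (mkposreal _ Hde). intros w Hw.
    change (Cmod (w - p) < Rmin d e) in Hw. pose proof (Rmin_l d e). pose proof (Rmin_r d e).
    assert (Hgw : g w <> RtoC 0).
    { intros Hg0. specialize (Hnear w ltac:(lra)). rewrite Hg0 in Hnear.
      replace (RtoC 0 - g p)%C with (- g p)%C in Hnear by ring. rewrite Cmod_opp in Hnear. lra. }
    destruct (Ceq_dec (f w) (RtoC 0)) as [-> | Hfw]; [reflexivity | exfalso].
    apply (Cmult_neq_0 _ _ (Cpow_nz _ a Hfw) Hgw), Hfg, He. change (Cmod (w - p) < e). lra. }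
  rewrite <- (is_C_derive_unique f p df Hf).
  apply is_C_derive_unique, (is_derive_ext_loc _ _ _ _ Hloc), is_Cderive_const.
Qed.

Lemma Csum_map_scal (x : C) (h : nat -> C) l :
  fold_right Cplus (RtoC 0) (map (fun i => x * h i)%C l) = (x * fold_right Cplus (RtoC 0) (map h l))%C.
Proof. induction l as [| i l IH]; simpl; [ring | rewrite IH; ring]. Qed.

Lemma Csum_map_zero (h : nat -> C) l : (forall i, In i l -> h i = RtoC 0) ->
  fold_right Cplus (RtoC 0) (map h l) = RtoC 0.
Proof. induction l as [| i l IH]; simpl; intros Hh; [reflexivity | rewrite Hh, IH by auto; ring]. Qed.

Lemma ex_Cderive_Csum_map (h : nat -> C -> C) l p : (forall i, In i l -> exists d, is_Cderive (h i) p d) ->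
  exists d, is_Cderive (fun z => fold_right Cplus (RtoC 0) (map (fun i => h i z) l)) p d.
Proof.
  induction l as [| i l IH]; simpl; intros Hh; [exists (RtoC 0); apply is_Cderive_const |].
  destruct (Hh i (or_introl eq_refl)) as [d1 H1]. destruct IH as [d2 H2]; [auto |].
  exists (d1 + d2)%C. now apply is_Cderive_plus.
Qed.

Lemma modular_form_ex_Cderive w g p : is_modular_form w g -> upper_half p -> exists l, is_Cderive g p l.
Proof. intros [Hd _] Hp. now apply Hd. Qed.

Lemma MLDE_order_gt_vanishing_order k N m phi psi p (F : C -> C) :
  qwf phi -> qwf psi -> (forall z, F z = (qeval phi z ^ m * qeval psi z)%C) ->
  upper_half p -> qeval phi p = RtoC 0 -> qeval (qddz phi) p <> RtoC 0 -> qeval psi p <> RtoC 0 ->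
  satisfies_monic_MLDE k N F -> (m < N)%nat.
Proof.
  intros Hphi Hpsi HF Hp Hzero Hsimple Hpsi0 [g [Hg Heq]].
  destruct (Nat.lt_ge_cases m N) as [HmN | HNm]; [exact HmN | exfalso].
  set (Cf := serre_cofactor k m phi psi).
  assert (HCf : forall j, qwf (Cf j)) by (intros j; now apply qwf_serre_cofactor).
  set (Psi := fun z => (qeval (Cf N) z + fold_right Cplus (RtoC 0)
    (map (fun i => g i z * qeval phi z ^ i * qeval (Cf (N - i)%nat) z) (seq 1 N)))%C).
  assert (Hfactor : forall z, upper_half z -> (qeval phi z ^ (m - N) * Psi z)%C = RtoC 0).
  { intros z Hz. rewrite <- (Heq z Hz). unfold Psi.
    rewrite (SerreIter_factor k m phi psi F), Cmult_plus_distr_l, <- Csum_map_scal by auto.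
    f_equal. f_equal. apply map_ext_in. intros i Hi. apply in_seq in Hi.
    rewrite (SerreIter_factor k m phi psi F) by (auto; lia).
    replace (m - (N - i))%nat with (m - N + i)%nat by lia. rewrite Cpow_add_r. fold Cf. ring. }
  assert (HPsi : exists l, is_Cderive Psi p l).
  { destruct (ex_Cderive_Csum_map
      (fun i z => g i z * qeval phi z ^ i * qeval (Cf (N - i)%nat) z)%C (seq 1 N) p) as [d Hd].
    - intros i Hi. apply in_seq in Hi.
      destruct (modular_form_ex_Cderive _ _ p (Hg i ltac:(lia)) Hp) as [l Hl].
      eexists. apply is_Cderive_mult; [apply is_Cderive_mult; [exact Hl |] | now apply is_Cderive_qeval].
      eapply is_derive_ext; [intros t; apply qeval_QPow |].
      apply is_Cderive_qeval; [now apply qwf_QPow | exact Hp].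
    - eexists. apply is_Cderive_plus; [now apply is_Cderive_qeval | exact Hd]. }
  assert (HPsi_p : Psi p = qeval (Cf N) p).
  { unfold Psi. rewrite Csum_map_zero; [ring |]. intros i Hi. apply in_seq in Hi.
    rewrite Hzero. replace i with (S (i - 1)) by lia. simpl. ring. }
  destruct HPsi as [l Hl]. apply Hsimple.
  apply (is_Cderive_eq_0_of_pow_mul (qeval phi) Psi p (m - N) _ l Hp);
    [now apply is_Cderive_qeval | exact Hl | | exact Hfactor].
  rewrite HPsi_p. now apply serre_cofactor_neq_0.
Qed.

(** * Simple zeros of [E4] and [E6] *)

Definition rser (c : nat -> R) (x : R) : R := Series (fun j => c j * x ^ S j).

Lemma pser_RtoC (c : nat -> R) x : pser (fun j => RtoC (c j)) (RtoC x) = RtoC (rser c x).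
Proof.
  unfold pser, CSeries, rser.
  rewrite (Series_ext (fun j => Im _) (fun j => 0 * 0))
    by (intros j; rewrite <- RtoC_pow, <- RtoC_mult; simpl; ring).
  rewrite Series_scal_l, Rmult_0_l.
  rewrite (Series_ext (fun j => Re _) (fun j => c j * x ^ S j))
    by (intros j; now rewrite <- RtoC_pow, <- RtoC_mult).
  reflexivity.
Qed.

Lemma Series_geom_scal (K q : R) : 0 <= q < 1 -> is_series (fun j => K * q ^ j) (K / (1 - q)).
Proof.
  intros Hq. apply (@is_series_scal_l R_AbsRing R_NormedModule K _ (/ (1 - q))).
  apply is_series_geom. rewrite Rabs_right; lra.
Qed.

Lemma rser_near_id (c : nat -> R) B b x : c 0%nat = 1 -> (forall j, Rabs (c j) <= B ^ j) ->
  0 <= B -> Rabs x <= b -> B * b < 1 -> (1 - B * b) * Rabs (rser c x - x) <= B * b * Rabs x.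
Proof.
  intros H0 Hc HB Hx Hb. set (q := B * b).
  assert (Hq : 0 <= q < 1) by (pose proof (Rabs_pos x); unfold q; split; [nra | lra]).
  assert (Hterm : forall j, Rabs (c j * x ^ S j) <= Rabs x * q ^ j).
  { intros j. rewrite Rabs_mult, <- RPow_abs, <- tech_pow_Rmult. unfold q. rewrite Rpow_mult_distr.
    pose proof (Rabs_pos x). pose proof (pow_le _ j (Rabs_pos x)).
    assert (Hxb : Rabs x ^ j <= b ^ j) by (apply pow_incr; lra).
    apply Rle_trans with (B ^ j * (Rabs x * b ^ j)); [| right; ring].
    apply Rmult_le_compat; [apply Rabs_pos | apply Rmult_le_pos; lra | apply Hc |].
    apply Rmult_le_compat_l; lra. }
  assert (Htail : forall j, Rabs (c (S j) * x ^ S (S j)) <= Rabs x * q * q ^ j)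
    by (intros j; rewrite Rmult_assoc, tech_pow_Rmult; apply Hterm).
  assert (Hgeom : forall K, ex_series (fun j => K * q ^ j))
    by (intros K; eexists; now apply Series_geom_scal).
  unfold rser. rewrite Series_incr_1 by (apply ex_series_Rabs_le with (fun j => Rabs x * q ^ j); auto).
  rewrite H0. replace (1 * x ^ 1 + _ - x) with (Series (fun j => c (S j) * x ^ S (S j))) by (simpl; ring).
  apply (Rmult_le_reg_r (/ (1 - q))); [apply Rinv_0_lt_compat; lra |].
  replace ((1 - q) * _ * / (1 - q)) with (Rabs (Series (fun j => c (S j) * x ^ S (S j)))) by (field; lra).
  replace (q * Rabs x * / (1 - q)) with (Series (fun j => Rabs x * q * q ^ j))
    by (rewrite (is_series_unique _ _ (Series_geom_scal _ q Hq)); field; lra).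
  eapply Rle_trans; [apply Series_Rabs; apply ex_series_Rabs_le with (fun j => Rabs x * q * q ^ j); auto;
    intros j; rewrite Rabs_Rabsolu; apply Htail |].
  apply Series_le; [intros j; split; [apply Rabs_pos | apply Htail] | apply Hgeom].
Qed.

Lemma rser_continuity_pt (c : nat -> R) x : poly_bounded (fun j => RtoC (c j)) -> Rabs x < 1 ->
  continuity_pt (rser c) x.
Proof.
  intros Hc Hx. assert (Hw : Cmod (RtoC x) < 1) by now rewrite Cmod_R.
  unfold continuity_pt, continue_in, limit1_in, limit_in. simpl. unfold R_dist.
  intros eps Heps.
  destruct (is_Cderive_continuous _ _ _ (is_Cderive_pser _ _ Hc Hw) eps Heps) as [d [Hd Hnear]].
  exists d. split; [exact Hd |]. intros y [_ Hy].
  specialize (Hnear (RtoC y)). rewrite !pser_RtoC, <- !RtoC_minus, !Cmod_R in Hnear. now apply Hnear.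
Qed.

Lemma qvar_pair (x0 y : R) :
  qvar (x0, y) = (exp (- (2 * PI) * y) * cos (2 * PI * x0), exp (- (2 * PI) * y) * sin (2 * PI * x0)).
Proof. unfold qvar, cexp. simpl. f_equal; (f_equal; [f_equal | f_equal]); ring. Qed.

Definition real_q_point (x : R) : C :=
  (if Rlt_dec x 0 then -1/2 else 0, - ln (Rabs x) / (2 * PI)).

Lemma qvar_real_q_point x : x <> 0 -> qvar (real_q_point x) = RtoC x.
Proof.
  intros Hx. pose proof PI_RGT_0. unfold real_q_point. rewrite qvar_pair.
  replace (- (2 * PI) * (- ln (Rabs x) / (2 * PI))) with (ln (Rabs x)) by (field; lra).
  rewrite exp_ln by now apply Rabs_pos_lt. unfold RtoC.
  destruct (Rlt_dec x 0) as [Hneg | Hpos].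
  - replace (2 * PI * (-1 / 2)) with (- PI) by field.
    rewrite cos_neg, sin_neg, cos_PI, sin_PI, Rabs_left by assumption. f_equal; ring.
  - rewrite Rmult_0_r, cos_0, sin_0, Rabs_right by lra. f_equal; ring.
Qed.

Lemma upper_half_real_q_point x : 0 < Rabs x < 1 -> upper_half (real_q_point x).
Proof.
  intros Hx. unfold upper_half, real_q_point, Im. simpl. pose proof PI_RGT_0.
  assert (ln (Rabs x) < 0) by (rewrite <- ln_1; apply ln_increasing; lra).
  apply Rdiv_lt_0_compat; lra.
Qed.

Lemma qeval_eis_real c k x : x <> 0 ->
  qeval (eis c k) (real_q_point x) = RtoC (1 + c * rser (fun j => sigma (k - 1) (S j)) x).
Proof.
  intros Hx. cbn [eis qeval]. rewrite qvar_real_q_point, pser_RtoC by assumption.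
  now rewrite RtoC_plus, RtoC_mult.
Qed.

Lemma qeval_qddz_eis_real c k x : x <> 0 -> Rabs x < 1 ->
  qeval (qddz (eis c k)) (real_q_point x)
  = (c * two_pi_i * RtoC (rser (fun j => INR (S j) * sigma (k - 1) (S j))%R x))%C.
Proof.
  intros Hx Hx1. cbn [eis qddz qeval]. rewrite qvar_real_q_point by assumption.
  unfold qcoef_deriv. rewrite pser_scal by
    (try apply poly_bounded_Sj, poly_bounded_sigma; now rewrite Cmod_R).
  rewrite <- pser_RtoC. unfold pser.
  rewrite (CSeries_ext (fun j => INR (S j) * sigma (k - 1) (S j) * RtoC x ^ S j)%C
                       (fun j => RtoC (INR (S j) * sigma (k - 1) (S j))%R * RtoC x ^ S j)%C)
    by (intros j; now rewrite RtoC_mult).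
  ring.
Qed.

Lemma INR_S_le_pow_2 j : INR (S j) <= 2 ^ j.
Proof.
  induction j as [| j IH]; [simpl; lra |].
  rewrite S_INR. change (2 ^ S j) with (2 * 2 ^ j). pose proof (pow_R1_Rle 2 j ltac:(lra)).
  lra.
Qed.

Lemma INR_S_pow_le K j : INR (S j) ^ K <= (2 ^ K) ^ j.
Proof.
  rewrite <- pow_mult, Nat.mul_comm, pow_mult. apply pow_incr.
  split; [apply pos_INR | apply INR_S_le_pow_2].
Qed.

Lemma sigma_coef_bound k j : (1 <= k)%nat -> Rabs (sigma (k - 1) (S j)) <= (2 ^ k) ^ j.
Proof.
  intros Hk. pose proof (sigma_bound (k - 1) (S j)) as Hs. replace (S (k - 1)) with k in Hs by lia.
  rewrite Rabs_right by lra. eapply Rle_trans; [apply Hs | apply INR_S_pow_le].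
Qed.

Lemma Sj_sigma_coef_bound k j : (1 <= k)%nat -> Rabs (INR (S j) * sigma (k - 1) (S j)) <= (2 ^ S k) ^ j.
Proof.
  intros Hk. pose proof (sigma_bound (k - 1) (S j)) as Hs. replace (S (k - 1)) with k in Hs by lia.
  pose proof (pos_INR (S j)).
  rewrite Rabs_right by (apply Rle_ge, Rmult_le_pos; lra). eapply Rle_trans; [| apply INR_S_pow_le].
  rewrite <- tech_pow_Rmult. apply Rmult_le_compat_l; lra.
Qed.

Lemma eis_real_root (c : R) k sg a b :
  (1 <= k)%nat -> Rabs sg = 1 -> 0 < a < b -> c * sg < 0 ->
  (Rabs c + 2 ^ k) * a < 1 -> 1 - 2 ^ k * b < Rabs c * b * (1 - 2 * 2 ^ k * b) ->
  2 * 2 ^ k * b < 1 -> exists t, a <= t <= b /\ 1 + c * rser (fun j => sigma (k - 1) (S j)) (sg * t) = 0.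
Proof.
  intros Hk Hsg Hab Hc Ha Hb Hb1. set (B := 2 ^ k) in *. set (sig := fun j => sigma (k - 1) (S j)).
  assert (HB : 1 <= B) by (apply pow_R1_Rle; lra).
  assert (Hcsg : c * sg = - Rabs c)
    by (rewrite <- (Rmult_1_r (Rabs c)), <- Hsg, <- Rabs_mult, Rabs_left; lra).
  assert (Hnear : forall t, 0 < t -> B * t < 1 ->
    (1 - B * t) * Rabs (rser sig (sg * t) - sg * t) <= B * t * t).
  { intros t Ht HBt. assert (Hst : Rabs (sg * t) = t) by (rewrite Rabs_mult, Hsg, Rabs_right; lra).
    pose proof (rser_near_id sig B t (sg * t) (sigma_1 _) (fun j => sigma_coef_bound k j Hk)
                  ltac:(lra) (Req_le _ _ Hst) HBt) as Hbound.
    now rewrite Hst in Hbound. }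
  destruct (Ranalysis5.IVT_interv (fun t => - (1 + c * rser sig (sg * t))) a b) as [t [Ht Hroot]].
  - intros t Ht. apply (continuity_pt_opp (fun t => 1 + c * rser sig (sg * t))).
    apply (continuity_pt_plus (fct_cte 1) (mult_real_fct c (fun t => rser sig (sg * t))));
      [apply continuity_pt_const; now intros ? ? |].
    apply continuity_pt_scal, (continuity_pt_comp (fun t => sg * t) (rser sig)); [reg |].
    apply rser_continuity_pt; [apply poly_bounded_sigma | rewrite Rabs_mult, Hsg, Rabs_right; nra].
  - lra.
  - set (E := rser sig (sg * a) - sg * a).
    pose proof (Rmult_le_compat_l (Rabs c) _ _ (Rabs_pos c) (Hnear a ltac:(lra) ltac:(nra))) as HE.
    fold E in HE.
    assert (Rabs c * a + Rabs c * Rabs E < 1) by (apply (Rmult_lt_reg_l (1 - B * a)); nra).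
    pose proof (Rle_abs (- (c * E))). rewrite Rabs_Ropp, Rabs_mult in *.
    replace (rser sig (sg * a)) with (sg * a + E) by (unfold E; ring). nra.
  - set (E := rser sig (sg * b) - sg * b).
    pose proof (Rmult_le_compat_l (Rabs c) _ _ (Rabs_pos c) (Hnear b ltac:(lra) ltac:(nra))) as HE.
    fold E in HE.
    assert (1 < Rabs c * b - Rabs c * Rabs E) by (apply (Rmult_lt_reg_l (1 - B * b)); nra).
    pose proof (Rle_abs (c * E)). rewrite Rabs_mult in *.
    replace (rser sig (sg * b)) with (sg * b + E) by (unfold E; ring). nra.
  - exists t. split; [exact Ht | lra].
Qed.

(* The numerical hypotheses feed [rser_near_id] with [B = 2^k], [2^(k+1)] and [2^k']: they give a sign
   change of [1 + c sum_j sigma_(k-1)(j+1) q^(j+1)] on [q = sg t], [a <= t <= b], and keep the derivative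
   and the other Eisenstein series away from zero there. *)
Lemma eis_simple_zero (c c' : R) k k' sg a b :
  (1 <= k)%nat -> (1 <= k')%nat -> Rabs sg = 1 -> 0 < a < b -> c * sg < 0 -> 0 < c' * sg ->
  (Rabs c + 2 ^ k) * a < 1 -> 1 - 2 ^ k * b < Rabs c * b * (1 - 2 * 2 ^ k * b) ->
  2 * 2 ^ S k * b < 1 -> 2 * 2 ^ k' * b < 1 ->
  exists p, upper_half p /\ qeval (eis c k) p = RtoC 0 /\
    qeval (qddz (eis c k)) p <> RtoC 0 /\ qeval (eis c' k') p <> RtoC 0.
Proof.
  intros Hk Hk' Hsg Hab Hc Hc' Ha Hb HdB HoB.
  assert (Hk2 : 1 <= 2 ^ k) by (apply pow_R1_Rle; lra).
  assert (Hk'2 : 1 <= 2 ^ k') by (apply pow_R1_Rle; lra).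
  change (2 ^ S k) with (2 * 2 ^ k) in HdB.
  destruct (eis_real_root c k sg a b Hk Hsg Hab Hc Ha Hb ltac:(nra)) as [t [Ht Hroot]].
  set (x := sg * t) in *.
  assert (Hx : Rabs x = t) by (unfold x; rewrite Rabs_mult, Hsg, Rabs_right; lra).
  assert (Hx0 : x <> 0) by (intros Hx0; rewrite Hx0, Rabs_R0 in Hx; lra).
  assert (Hclose : forall (co : nat -> R) B, co 0%nat = 1 -> (forall j, Rabs (co j) <= B ^ j) ->
    1 <= B -> 2 * B * b < 1 -> Rabs (rser co x - x) < Rabs x).
  { intros co B H0 Hco HB HBb.
    pose proof (rser_near_id co B b x H0 Hco ltac:(lra) ltac:(lra) ltac:(nra)) as Hn.
    apply (Rmult_lt_reg_l (1 - B * b)); nra. }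
  exists (real_q_point x). split; [| split; [| split]].
  - apply upper_half_real_q_point. nra.
  - rewrite qeval_eis_real by exact Hx0. now rewrite Hroot.
  - rewrite qeval_qddz_eis_real by (auto; nra).
    apply Cmult_neq_0; [apply Cmult_neq_0; [| apply two_pi_i_neq_0] |]; intros Heq; apply RtoC_inj in Heq.
    + subst c. lra.
    + pose proof (Hclose (fun j => INR (S j) * sigma (k - 1) (S j)) (2 ^ S k)
        ltac:(cbv beta; rewrite sigma_1; simpl; ring)
        (fun j => Sj_sigma_coef_bound k j Hk) ltac:(simpl; lra) ltac:(simpl; lra)) as Hr.
      rewrite Heq, Rminus_0_l, Rabs_Ropp in Hr. lra.
  - rewrite qeval_eis_real by exact Hx0. intros Heq. apply RtoC_inj in Heq.
    pose proof (Hclose _ (2 ^ k') (sigma_1 _) (fun j => sigma_coef_bound k' j Hk') Hk'2 HoB) as Hr.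
    set (r := rser (fun j => sigma (k' - 1) (S j)) x) in *.
    assert (Hc'x : c' * x = Rabs c' * t)
      by (unfold x; rewrite <- Rmult_assoc, <- (Rabs_right (c' * sg)), Rabs_mult, Hsg by lra; ring).
    assert (Hc'E : Rabs (c' * (r - x)) < Rabs c' * t).
    { rewrite Rabs_mult, <- Hx. apply Rmult_lt_compat_l; [| exact Hr].
      apply Rabs_pos_lt. intros Hc0. rewrite Hc0 in Hc'. lra. }
    pose proof (Rle_abs (- (c' * (r - x)))). rewrite Rabs_Ropp in *. nra.
Qed.

Lemma E4_simple_zero : exists p, upper_half p /\ qeval (eis 240 4) p = RtoC 0 /\
  qeval (qddz (eis 240 4)) p <> RtoC 0 /\ qeval (eis (-504) 6) p <> RtoC 0.
Proof.
  apply (eis_simple_zero _ _ _ _ (-1) (1 / 1000) (1 / 200)); try lia;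
    try rewrite Rabs_left by lra; try rewrite Rabs_right by lra; simpl; lra.
Qed.

Lemma E6_simple_zero : exists p, upper_half p /\ qeval (eis (-504) 6) p = RtoC 0 /\
  qeval (qddz (eis (-504) 6)) p <> RtoC 0 /\ qeval (eis 240 4) p <> RtoC 0.
Proof.
  apply (eis_simple_zero _ _ _ _ 1 (1 / 10000) (1 / 300)); try lia;
    try rewrite Rabs_left by lra; try rewrite Rabs_right by lra; simpl; lra.
Qed.

Theorem theorem6p2 (m n N : nat) (HN : (0 < N)%nat) :
  satisfies_monic_MLDE (INR (4 * m + 6 * n))%R N
    (fun z => Cmult (Cpow (E4 z) m) (Cpow (E6 z) n)) ->
  (Nat.max m n + 1 <= N)%nat.
Proof.
  intros Hmlde.
  assert (Hm : (m < N)%nat).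
  { destruct E4_simple_zero as [p [Hp [Hzero [Hsimple Hother]]]].
    refine (MLDE_order_gt_vanishing_order _ _ m _ (QPow (eis (-504) 6) n) p _
      (qwf_eis _ _) (qwf_QPow _ _ (qwf_eis _ _)) _ Hp Hzero Hsimple _ Hmlde).
    - intros z. now rewrite qeval_QPow.
    - rewrite qeval_QPow. now apply Cpow_nz. }
  assert (Hn : (n < N)%nat).
  { destruct E6_simple_zero as [p [Hp [Hzero [Hsimple Hother]]]].
    refine (MLDE_order_gt_vanishing_order _ _ n _ (QPow (eis 240 4) m) p _
      (qwf_eis _ _) (qwf_QPow _ _ (qwf_eis _ _)) _ Hp Hzero Hsimple _ Hmlde).
    - intros z. rewrite qeval_QPow. apply Cmult_comm.
    - rewrite qeval_QPow. now apply Cpow_nz. }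
  lia.
Qed.
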